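(* Let $X$ be a linearly ordered set and let $k,n\ge1$ be odd natural numbers with $k\le\sqrt n$. Then $\mathrm{med}_k\in\langle\{\mathrm{med}_n\}\rangle$.
   Context: A clone on $X$ is a set of finitary operations on $X$ containing all projections and closed under composition; $\langle\mathscr F\rangle$ is the smallest clone containing $\mathscr F$. For odd $n$, $\mathrm{med}_n(x_1,\dots,x_n)$ is the $\frac{n+1}{2}$-th smallest entry of $(x_1,\dots,x_n)$ (counted with multiplicity) with respect to the linear order of $X$. *)

From mathcomp Require Import all_boot all_order.
Set Implicit Arguments. Unset Strict Implicit. Unset Printing Implicit Defensive.
Import Order.TTheory.
Local Open Scope order_scope.

Definition op (X : Type) := {n : nat & (('I_n -> X) -> X)}.

Definition mkop (X : Type) (n : nat) (f : ('I_n -> X) -> X) : op X := existT _ n f.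

Definition is_clone (X : Type) (C : op X -> Prop) : Prop :=
  (forall (n : nat) (i : 'I_n), C (mkop (fun x : 'I_n -> X => x i))) /\
  (forall (n m : nat) (f : ('I_n -> X) -> X) (g : 'I_n -> ('I_m -> X) -> X),
      C (mkop f) -> (forall i, C (mkop (g i))) ->
      C (mkop (fun x : 'I_m -> X => f (fun i => g i x)))).

Definition clone_gen (X : Type) (F : op X -> Prop) : op X -> Prop :=
  fun o => forall C : op X -> Prop, is_clone C -> (forall f, F f -> C f) -> C o.

(* med of arity m.+1: the ((m.+1 + 1)/2)-th smallest entry (1-based),
   i.e. index ((m.+2)/2 - 1) of the sorted list of entries (with multiplicity). *)
Definition med_fun (d : Order.disp_t) (X : orderType d) (m : nat)
  (x : 'I_m.+1 -> X) : X :=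
  nth (x ord0) (sort (<=%O : rel X) (codom x)) ((m.+2)./2).-1.

Definition med (d : Order.disp_t) (X : orderType d) (n : nat) : op X :=
  mkop (@med_fun d X n.-1).

From mathcomp Require Import all_boot all_order zify.
From Stdlib Require Import FunctionalExtensionality.
Import Order.TTheory.

Set Implicit Arguments.
Unset Strict Implicit.
Unset Printing Implicit Defensive.

(* Fill the n arguments of med_n cyclically with the k arguments of med_k:
   y_j = x_(j mod k).  With m = n %/ k >= k, every x_i occurs at least m times
   among the y_j, and n < m (k + 1).  If v = med_k x, at least (k + 1)/2 of the
   x_i are >= v and at least (k + 1)/2 are <= v; hence more than n/2 of the y_j
   are >= v and more than n/2 are <= v, i.e. med_n y = v.  So med_k is obtained
   from med_n by identifying variables. *)

Lemma count_iota_modn_ge (k m n : nat) (P : pred nat) : 0 < k -> m * k <= n ->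
  m * count P (iota 0 k) <= count (fun j => P (j %% k)) (iota 0 n).
Proof.
move=> k_gt0 mk_le_n.
rewrite -(subnKC mk_le_n) iotaD count_cat; apply: leq_trans (leq_addr _ _).
apply: eq_leq; elim: m {mk_le_n} => [|m IHm]; first by rewrite mul0n.
rewrite [m.+1 * k]mulSnr iotaD count_cat -IHm add0n mulSnr; congr (_ + _).
rewrite -(addn0 (m * k)) iotaDl count_map; apply: eq_in_count => j.
by rewrite mem_iota add0n => /andP[_ jk] /=; rewrite ?addn0 modnMDl modn_small.
Qed.

Lemma count_codom_ord (T : Type) (P : pred T) (N : nat) (g : nat -> T) :
  count P (codom (fun j : 'I_N => g j)) = count (fun j => P (g j)) (iota 0 N).
Proof. by rewrite codomE count_map -val_enum_ord count_map. Qed.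

Lemma count_codom_modn_ge (T : Type) (P : pred T) (k N m : nat)
    (x : 'I_k.+1 -> T) : m * k.+1 <= N ->
  m * count P (codom x) <= count P (codom (fun j : 'I_N => x (inord (j %% k.+1)))).
Proof.
move=> mk_le_N.
have -> : codom x = codom (fun i : 'I_k.+1 => x (inord i)).
  by apply: eq_codom => i; rewrite inord_val.
rewrite (count_codom_ord P _ (fun i => x (inord i))).
rewrite (count_codom_ord P _ (fun j => x (inord (j %% k.+1)))).
exact: (count_iota_modn_ge (fun i => P (x (inord i))) (ltn0Sn k) mk_le_N).
Qed.

Lemma periodic_median_rank (k n m lt le : nat) : ~~ odd k -> ~~ odd n ->
  n.+1 < m * k.+2 -> lt <= k./2 < le ->
  (n.+1 <= n./2 + m * (k.+1 - lt)) && (n./2 < m * le).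
Proof.
have even_double (j : nat) : ~~ odd j -> exists i, j = i.*2.
  by move=> /negbTE ej; exists j./2; rewrite -{1}(odd_double_half j) ej.
move=> /even_double[a ->] /even_double[b ->]; rewrite !doubleK.
move=> n_lt /andP[lt_le_a a_lt_le].
have m_mul_le : m * a.+1 <= m * le by rewrite leq_mul2l a_lt_le orbT.
have m_mul_ge : m * a.+1 <= m * (a.*2.+1 - lt).
  by rewrite leq_mul2l; apply/orP; right; lia.
have : m * a.*2.+2 = (m * a.+1).*2 by rewrite -doubleS doubleMr.
lia.
Qed.

Section OrderStatistics.
Variables (d : Order.disp_t) (X : orderType d).
Local Open Scope order_scope.

Lemma nth_sorted_eqP (t : seq X) (x0 v : X) (p : nat) :
  sorted <=%O t -> (p < size t)%N ->
  nth x0 t p = v <->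
  (count (< v) t <= p < count (<= v) t)%N.
Proof.
move=> t_sorted p_lt.
have le_nth := le_sorted_leq_nth x0 t_sorted.
set w := nth x0 t p.
have rank_w : (count (< w) t <= p < count (<= w) t)%N.
  apply/andP; split.
  - rewrite -(cat_take_drop p t) count_cat.
    have -> : count (< w) (drop p t) = 0%N.
      apply/eqP; rewrite -leqn0 leqNgt -has_count; apply/hasPn => y.
      move=> /(nthP x0) [j j_lt <-]; rewrite nth_drop -leNgt.
      by apply: le_nth; rewrite ?inE -?ltn_subRL -?size_drop ?leq_addr.
    by rewrite addn0 (leq_trans (count_size _ _)) // size_takel // ltnW.
  - have all_le_w : all (<= w) (take p.+1 t).
      apply/allP => y /(nthP x0) [j]; rewrite size_takel // => j_lt <-.
      rewrite nth_take //; apply: le_nth; rewrite ?inE //.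
      exact: leq_trans j_lt p_lt.
    rewrite -(cat_take_drop p.+1 t) count_cat; apply: leq_trans (leq_addr _ _).
    by move: all_le_w; rewrite all_count => /eqP ->; rewrite size_takel.
split=> [<- // | /andP[lt_v v_le]].
move: rank_w => /andP[lt_w w_le].
case: (ltgtP w v) => // [w_lt_v | v_lt_w].
- have : (count (<= w) t <= count (< v) t)%N.
    by apply: sub_count => y /= y_le; apply: le_lt_trans y_le w_lt_v.
  lia.
- have : (count (<= v) t <= count (< w) t)%N.
    by apply: sub_count => y /= y_le; apply: le_lt_trans y_le v_lt_w.
  lia.
Qed.

Lemma med_funP (m : nat) (x : 'I_m.+1 -> X) (v : X) :
  med_fun x = v <->
  (count (< v) (codom x) <= m./2 < count (<= v) (codom x))%N.
Proof.
rewrite /med_fun -(count_sort <=%O) -[count (<= v) _](count_sort <=%O).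
apply: nth_sorted_eqP; first exact: sort_le_sorted.
by rewrite size_sort size_codom card_ord ltnS leq_half_double -addnn -addnS leq_addr.
Qed.

Lemma med_fun_periodic (k n : nat) (x : 'I_k.+1 -> X) :
  odd k.+1 -> odd n.+1 -> (k.+1 * k.+1 <= n.+1)%N ->
  med_fun x = med_fun (fun j : 'I_n.+1 => x (inord (j %% k.+1))).
Proof.
move=> odd_k odd_n kk_le_n; set y := fun j : 'I_n.+1 => _.
set m := (n.+1 %/ k.+1)%N.
have k_le_m : (k.+1 <= m)%N by rewrite leq_divRL.
have mk_le_n : (m * k.+1 <= n.+1)%N by rewrite leq_divM.
have n_lt : (n.+1 < m * k.+2)%N.
  have := ltn_pmod n.+1 (ltn0Sn k); have := divn_eq n.+1 k.+1; rewrite -/m; nia.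
set v := med_fun x.
have x_rank : (count (< v) (codom x) <= k./2 < count (<= v) (codom x))%N.
  exact/med_funP.
apply/esym/med_funP.
have ge_y := count_codom_modn_ge (predC (< v)) x mk_le_n.
have le_y := count_codom_modn_ge (<= v) x mk_le_n.
have ge_x : (k.+1 - count (< v) (codom x) = count (predC (< v)) (codom x))%N.
  by have := count_predC (< v) (codom x); rewrite size_codom card_ord; lia.
have /andP[lt_y y_le] := periodic_median_rank odd_k odd_n n_lt x_rank.
apply/andP; split; last exact: leq_trans y_le le_y.
rewrite -(leq_add2r (count (predC (< v)) (codom y))) count_predC size_codom card_ord.
by apply: leq_trans lt_y _; rewrite leq_add2l ge_x.
Qed.

End OrderStatistics.

Lemma clone_gen_minor (X : Type) (F : op X -> Prop) (n m : nat)
    (f : ('I_n -> X) -> X) (sigma : 'I_n -> 'I_m) :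
  F (mkop f) -> clone_gen F (mkop (fun x : 'I_m -> X => f (fun i => x (sigma i)))).
Proof.
move=> Ff C [proj_C comp_C] FC.
exact: (comp_C n m f (fun i x => x (sigma i)) (FC _ Ff) (fun i => proj_C m (sigma i))).
Qed.

Theorem mainTheorem3 (d : Order.disp_t) (X : orderType d) (k n : nat) :
  odd k -> odd n -> k * k <= n ->
  clone_gen (fun o => o = med X n) (med X k).
Proof.
case: k => [|k] // odd_k; case: n => [|n] // odd_n kk_le_n.
have -> : med X k.+1 = mkop (fun x : 'I_k.+1 -> X =>
    med_fun (fun j : 'I_n.+1 => x (inord (j %% k.+1)))).
  by congr mkop; apply: functional_extensionality => x; exact: med_fun_periodic.
exact: clone_gen_minor.
Qed.
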